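(* Consider the planar SLAM system $$\dot x = u\,R_\theta e_1,\qquad \dot\theta = u v,\qquad \dot p_i = 0\quad (1\le i\le N),$$ with measurements $z_i = R_{-\theta}(p_i - x)$. For an estimate $(\hat x,\hat\theta,\hat p_1,\dots,\hat p_N)$ let $\hat z_i = R_{-\hat\theta}(\hat p_i-\hat x)$ and let $E = (E_1,\dots,E_N)$ with $E_i = R_{\hat\theta}(\hat z_i - z_i)\in\mathbb R^2$. Let $\mathcal L_\theta:\mathbb R^{2N}\to\mathbb R$ and $\mathcal L_x,\mathcal L_1,\dots,\mathcal L_N:\mathbb R^{2N}\to\mathbb R^2$ be smooth maps vanishing at $0$, and consider the observer $$\dot{\hat\theta} = uv + \mathcal L_\theta(E),\qquad \dot{\hat x} = u R_{\hat\theta}e_1 + \mathcal L_\theta(E)\, e_3\wedge \hat x + \mathcal L_x(E),\qquad \dot{\hat p}_i = \mathcal L_\theta(E)\, e_3\wedge\hat p_i + \mathcal L_i(E).$$ Define the invariant state error $\eta = (\tilde\theta,\tilde x,\tilde p_1,\dots,\tilde p_N)$ by $$\tilde\theta = \hat\theta-\theta,\qquad \tilde x = \hat x - R_{\tilde\theta}x,\qquad \tilde p_i = \hat p_i - R_{\tilde\theta}p_i.$$ Then $E_i = \tilde p_i - \tilde x$ for each $i$, and $\eta$ satisfies the autonomous differential equation $$\dot{\tilde\theta} = \mathcal L_\theta(E),\qquad \dot{\tilde x} = \mathcal L_\theta(E)\,e_3\wedge\tilde x + \mathcal L_x(E),\qquad \dot{\tilde p}_i = \mathcal L_\theta(E)\,e_3\wedge\tilde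 p_i + \mathcal L_i(E),$$ which depends only on $\eta$ (and not on the trajectory, nor on $u(t),v(t)$). In particular, its linearization at $\eta=0$ is the time-invariant linear system $\frac{d}{dt}\delta\eta = LC\,\delta\eta$, where $C$ is the fixed linear map $\delta\eta=(\delta\theta,\delta x,\delta p_1,\dots,\delta p_N)\mapsto(\delta p_1-\delta x,\dots,\delta p_N-\delta x)$ and $L$ is the differential at $0$ of $(\mathcal L_\theta,\mathcal L_x,\mathcal L_1,\dots,\mathcal L_N)$, which can be chosen freely.
   Context: The state is $(x,\theta,p_1,\dots,p_N)$ with $x\in\mathbb R^2$ the vehicle position, $\theta\in\mathbb R$ its heading and $p_i\in\mathbb R^2$ the fixed landmark positions in a common reference frame; $u(t),v(t)\in\mathbb R$ are known scalar inputs. $e_1=(1,0)^T$, $R_\theta$ is the $2\times2$ rotation matrix of angle $\theta$. For a planar vector $w=(a,b)^T$, $e_3\wedge w$ denotes the planar vector $(-b,a)^T$ (cross product with the vertical unit vector $e_3$, restricted to the plane). *)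

From Stdlib Require Import Reals Lra.
Open Scope R_scope.

Definition R2 := (R * R)%type.
Definition v2add (a b : R2) : R2 := (fst a + fst b, snd a + snd b).
Definition v2sub (a b : R2) : R2 := (fst a - fst b, snd a - snd b).
Definition v2scal (c : R) (a : R2) : R2 := (c * fst a, c * snd a).
Definition v2zero : R2 := (0, 0).
Definition v2norm (a : R2) : R := Rabs (fst a) + Rabs (snd a).
Definition rot (th : R) (w : R2) : R2 :=
  (cos th * fst w - sin th * snd w, sin th * fst w + cos th * snd w).
Definition e1 : R2 := (1, 0).
(** e3 /\ w = (-b, a) for w = (a, b) *)
Definition e3w (w : R2) : R2 := (- snd w, fst w).

Definition deriv2 (f : R -> R2) (t : R) (l : R2) : Prop :=
  derivable_pt_lim (fun s => fst (f s)) t (fst l) /\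
  derivable_pt_lim (fun s => snd (f s)) t (snd l).

Fixpoint sumN (n : nat) (f : nat -> R) : R :=
  match n with O => 0 | S k => sumN k f + f k end.

(** The output space R^{2N}: only the indices i < N are meaningful. *)
Definition Evec := nat -> R2.
Definition normE (N : nat) (e : Evec) : R := sumN N (fun i => v2norm (e i)).
Definition combE (a b : R) (e e' : Evec) : Evec :=
  fun i => v2add (v2scal a (e i)) (v2scal b (e' i)).
Definition zeroE : Evec := fun _ => v2zero.

(** The (error) state space R x R^2 x (R^2)^N: only p_i, i < N, are meaningful. *)
Record State := mkState { s_th : R; s_x : R2; s_p : nat -> R2 }.
Definition normS (N : nat) (s : State) : R :=
  Rabs (s_th s) + v2norm (s_x s) + sumN N (fun i => v2norm (s_p s i)).
Definition subS (s s' : State) : State :=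
  mkState (s_th s - s_th s') (v2sub (s_x s) (s_x s')) (fun i => v2sub (s_p s i) (s_p s' i)).
Definition combS (a b : R) (s s' : State) : State :=
  mkState (a * s_th s + b * s_th s')
          (v2add (v2scal a (s_x s)) (v2scal b (s_x s')))
          (fun i => v2add (v2scal a (s_p s i)) (v2scal b (s_p s' i))).
Definition zeroS : State := mkState 0 v2zero (fun _ => v2zero).

Definition Cmap (N : nat) (s : State) : Evec :=
  fun i => if Nat.ltb i N then v2sub (s_p s i) (s_x s) else v2zero.

Definition Lmap (Lth : Evec -> R) (Lx : Evec -> R2) (Lp : nat -> Evec -> R2)
  (e : Evec) : State := mkState (Lth e) (Lx e) (fun i => Lp i e).

Definition linear_ES (N : nat) (D : Evec -> State) : Prop :=
  forall a b e e',
    s_th (D (combE a b e e')) = a * s_th (D e) + b * s_th (D e') /\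
    s_x (D (combE a b e e')) = v2add (v2scal a (s_x (D e))) (v2scal b (s_x (D e'))) /\
    (forall i, (i < N)%nat ->
       s_p (D (combE a b e e')) i = v2add (v2scal a (s_p (D e) i)) (v2scal b (s_p (D e') i))).
Definition linear_SS (N : nat) (D : State -> State) : Prop :=
  forall a b s s',
    s_th (D (combS a b s s')) = a * s_th (D s) + b * s_th (D s') /\
    s_x (D (combS a b s s')) = v2add (v2scal a (s_x (D s))) (v2scal b (s_x (D s'))) /\
    (forall i, (i < N)%nat ->
       s_p (D (combS a b s s')) i = v2add (v2scal a (s_p (D s) i)) (v2scal b (s_p (D s') i))).

Definition differential0_ES (N : nat) (f D : Evec -> State) : Prop :=
  linear_ES N D /\
  forall eps, eps > 0 -> exists delta, delta > 0 /\
    forall e, normE N e < delta ->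
      normS N (subS (subS (f e) (f zeroE)) (D e)) <= eps * normE N e.
Definition differential0_SS (N : nat) (f D : State -> State) : Prop :=
  linear_SS N D /\
  forall eps, eps > 0 -> exists delta, delta > 0 /\
    forall s, normS N s < delta ->
      normS N (subS (subS (f s) (f zeroS)) (D s)) <= eps * normS N s.

(** Output errors  E_i = R_{th^}(z^_i - z_i),  z_i = R_{-th}(p_i - x),  z^_i = R_{-th^}(p^_i - x^). *)
Definition Eerr (N : nat) (x : R2) (th : R) (p : nat -> R2)
  (xh : R2) (thh : R) (ph : nat -> R2) : Evec :=
  fun i => if Nat.ltb i N then
             rot thh (v2sub (rot (- thh) (v2sub (ph i) xh)) (rot (- th) (v2sub (p i) x)))
           else v2zero.

Definition eta (x : R2) (th : R) (p : nat -> R2) (xh : R2) (thh : R) (ph : nat -> R2)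
  : State :=
  mkState (thh - th) (v2sub xh (rot (thh - th) x))
          (fun i => v2sub (ph i) (rot (thh - th) (p i))).

Definition errorDyn (N : nat) (Lth : Evec -> R) (Lx : Evec -> R2)
  (Lp : nat -> Evec -> R2) (s : State) : State :=
  let E := Cmap N s in
  mkState (Lth E)
          (v2add (v2scal (Lth E) (e3w (s_x s))) (Lx E))
          (fun i => v2add (v2scal (Lth E) (e3w (s_p s i))) (Lp i E)).

(** The heading error [th~ = th^ - th] moves at rate [Lth(E)] because both
    headings receive the same input [u v].  Rotating the true state by [th~]
    makes the vehicle motion cancel: for any rotated error [y - R_th~ z] whose
    ingredient [y] follows [R_th~ z' + Lth(E) e3 /\ y + a], the product rule for
    [R_th~ z] (lemma [deriv2_rot]) leaves [Lth(E) e3 /\ (y - R_th~ z) + a]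
    (lemma [rotated_error_deriv]); applied to the vehicle position and to the
    fixed landmarks it gives the autonomous error dynamics.  Rotation algebra
    shows [E = C eta] ([Eerr_Cmap]).

    For the linearization, the remainder of [errorDyn] at [s] is bounded by the
    remainder of the gains at [C s] plus the quadratic term [|Lth(C s)| |s|]
    ([errorDyn_remainder]); [C] is bounded ([normE_Cmap]) and [Lth] grows at
    most linearly near [0] because its differential is a bounded linear map
    ([differential_th_bound]), so both terms are [o(|s|)] ([linearization]). *)

From Stdlib Require Import Reals.
From Stdlib Require Import Lra Lia FunctionalExtensionality.
Open Scope R_scope.

Lemma rot_rot a b w : rot a (rot b w) = rot (a + b) w.
Proof.
  destruct w as [w1 w2]; unfold rot; simpl.
  rewrite cos_plus, sin_plus; f_equal; ring.
Qed.

Lemma rot_0 w : rot 0 w = w.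
Proof. destruct w; unfold rot; simpl; rewrite cos_0, sin_0; f_equal; ring. Qed.

Lemma rot_sub a w w' : rot a (v2sub w w') = v2sub (rot a w) (rot a w').
Proof. destruct w, w'; unfold rot, v2sub; simpl; f_equal; ring. Qed.

Lemma rot_scal a c w : rot a (v2scal c w) = v2scal c (rot a w).
Proof. destruct w; unfold rot, v2scal; simpl; f_equal; ring. Qed.

Lemma rot_zero a : rot a v2zero = v2zero.
Proof. unfold rot, v2zero; simpl; f_equal; ring. Qed.

Lemma deriv2_ext f t l l' : deriv2 f t l -> l = l' -> deriv2 f t l'.
Proof. intros H <-; exact H. Qed.

Lemma deriv2_sub f g t a b :
  deriv2 f t a -> deriv2 g t b -> deriv2 (fun s => v2sub (f s) (g s)) t (v2sub a b).
Proof.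
  intros [Hf1 Hf2] [Hg1 Hg2]; split; simpl.
  - exact (derivable_pt_lim_minus _ _ t _ _ Hf1 Hg1).
  - exact (derivable_pt_lim_minus _ _ t _ _ Hf2 Hg2).
Qed.

Lemma deriv2_const w t : deriv2 (fun _ => w) t v2zero.
Proof. split; apply derivable_pt_lim_const. Qed.

Lemma derivable_pt_lim_cos_comp f t df : derivable_pt_lim f t df ->
  derivable_pt_lim (fun s => cos (f s)) t (- sin (f t) * df).
Proof.
  intro H.
  exact (derivable_pt_lim_comp f cos t df _ H (derivable_pt_lim_cos (f t))).
Qed.

Lemma derivable_pt_lim_sin_comp f t df : derivable_pt_lim f t df ->
  derivable_pt_lim (fun s => sin (f s)) t (cos (f t) * df).
Proof.
  intro H.
  exact (derivable_pt_lim_comp f sin t df _ H (derivable_pt_lim_sin (f t))).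
Qed.

Lemma derivable_pt_lim_value f t l l' :
  derivable_pt_lim f t l -> l = l' -> derivable_pt_lim f t l'.
Proof. intros H <-; exact H. Qed.

(** Product rule for a rotating vector: since [d/dphi R_phi = e3 /\ R_phi],
    [d/dt (R_phi w) = phi' e3 /\ (R_phi w) + R_phi w']. *)
Lemma deriv2_rot phi w t dphi dw :
  derivable_pt_lim phi t dphi -> deriv2 w t dw ->
  deriv2 (fun s => rot (phi s) (w s)) t
    (v2add (v2scal dphi (e3w (rot (phi t) (w t)))) (rot (phi t) dw)).
Proof.
  intros Hphi [Hw1 Hw2].
  pose proof (derivable_pt_lim_cos_comp _ _ _ Hphi) as Hc.
  pose proof (derivable_pt_lim_sin_comp _ _ _ Hphi) as Hs.
  unfold rot; split; simpl; eapply derivable_pt_lim_value.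
  - apply (derivable_pt_lim_minus (fun s => cos (phi s) * fst (w s)));
      apply (derivable_pt_lim_mult (fun s => _ (phi s))); eassumption.
  - unfold v2add, v2scal, e3w; simpl; ring.
  - apply (derivable_pt_lim_plus (fun s => sin (phi s) * fst (w s)));
      apply (derivable_pt_lim_mult (fun s => _ (phi s))); eassumption.
  - unfold v2add, v2scal, e3w; simpl; ring.
Qed.

(** Core invariance computation: if the angle error [phi] moves at rate [l] and
    [y] moves like the rotated [z] plus the correction [l e3 /\ y + a], then the
    error [y - R_phi z] obeys [l e3 /\ (y - R_phi z) + a]: the motion of [z]
    cancels out. *)
Lemma rotated_error_deriv phi y z t l dz a :
  derivable_pt_lim phi t l -> deriv2 z t dz ->
  deriv2 y t (v2add (v2add (rot (phi t) dz) (v2scal l (e3w (y t)))) a) ->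
  deriv2 (fun s => v2sub (y s) (rot (phi s) (z s))) t
    (v2add (v2scal l (e3w (v2sub (y t) (rot (phi t) (z t))))) a).
Proof.
  intros Hphi Hz Hy.
  eapply deriv2_ext; [exact (deriv2_sub _ _ _ _ _ Hy (deriv2_rot _ _ _ _ _ Hphi Hz))|].
  destruct (y t), (rot (phi t) (z t)), (rot (phi t) dz), a.
  unfold v2sub, v2add, v2scal, e3w; simpl; f_equal; ring.
Qed.

Lemma Eerr_Cmap N x th p xh thh ph :
  Eerr N x th p xh thh ph = Cmap N (eta x th p xh thh ph).
Proof.
  apply functional_extensionality; intro i; unfold Eerr, Cmap.
  destruct (Nat.ltb i N); [|reflexivity].
  unfold eta; simpl.
  rewrite rot_sub, !rot_rot, Rplus_opp_r, rot_0, rot_sub.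
  replace (thh + - th) with (thh - th) by ring.
  destruct (ph i), xh, (rot (thh - th) (p i)), (rot (thh - th) x).
  unfold v2sub; simpl; f_equal; ring.
Qed.

Section ErrorDynamics.

Variables (N : nat) (u v : R -> R) (x : R -> R2) (th : R -> R) (p : nat -> R2)
  (xh : R -> R2) (thh : R -> R) (ph : nat -> R -> R2)
  (Lth : Evec -> R) (Lx : Evec -> R2) (Lp : nat -> Evec -> R2).

Let E (t : R) : Evec := Eerr N (x t) (th t) p (xh t) (thh t) (fun j => ph j t).
Let etat (t : R) : State := eta (x t) (th t) p (xh t) (thh t) (fun j => ph j t).

Hypothesis Hx : forall t, deriv2 x t (v2scal (u t) (rot (th t) e1)).
Hypothesis Hth : forall t, derivable_pt_lim th t (u t * v t).
Hypothesis Hthh : forall t, derivable_pt_lim thh t (u t * v t + Lth (E t)).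
Hypothesis Hxh : forall t, deriv2 xh t
  (v2add (v2add (v2scal (u t) (rot (thh t) e1)) (v2scal (Lth (E t)) (e3w (xh t))))
     (Lx (E t))).
Hypothesis Hph : forall i t, (i < N)%nat -> deriv2 (ph i) t
  (v2add (v2scal (Lth (E t)) (e3w (ph i t))) (Lp i (E t))).

Lemma E_is_Cmap t : E t = Cmap N (etat t).
Proof. apply Eerr_Cmap. Qed.

Lemma theta_error_deriv t :
  derivable_pt_lim (fun s => thh s - th s) t (Lth (E t)).
Proof.
  eapply derivable_pt_lim_value; [exact (derivable_pt_lim_minus _ _ t _ _ (Hthh t) (Hth t))|].
  ring.
Qed.

Lemma x_error_deriv t :
  deriv2 (fun s => s_x (etat s)) t
    (s_x (errorDyn N Lth Lx Lp (etat t))).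
Proof.
  unfold errorDyn; simpl; rewrite <- E_is_Cmap.
  apply (rotated_error_deriv (fun s => thh s - th s) xh x t _ (v2scal (u t) (rot (th t) e1)));
    [apply theta_error_deriv | apply Hx |].
  eapply deriv2_ext; [apply Hxh|].
  rewrite rot_scal, rot_rot; replace (thh t - th t + th t) with (thh t) by ring.
  reflexivity.
Qed.

Lemma p_error_deriv i t : (i < N)%nat ->
  deriv2 (fun s => s_p (etat s) i) t
    (s_p (errorDyn N Lth Lx Lp (etat t)) i).
Proof.
  intro Hi; unfold errorDyn; simpl; rewrite <- E_is_Cmap.
  apply (rotated_error_deriv (fun s => thh s - th s) (ph i) (fun _ => p i) t _ v2zero);
    [apply theta_error_deriv | apply deriv2_const |].
  eapply deriv2_ext; [apply (Hph i t Hi)|].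
  rewrite rot_zero; destruct (v2scal _ _); unfold v2add, v2zero; simpl; f_equal; ring.
Qed.

Lemma error_dynamics t :
  derivable_pt_lim (fun s => s_th (etat s)) t (s_th (errorDyn N Lth Lx Lp (etat t))) /\
  deriv2 (fun s => s_x (etat s)) t (s_x (errorDyn N Lth Lx Lp (etat t))) /\
  (forall i, (i < N)%nat ->
     deriv2 (fun s => s_p (etat s) i) t (s_p (errorDyn N Lth Lx Lp (etat t)) i)).
Proof.
  split; [|split; [apply x_error_deriv | exact (fun i => p_error_deriv i t)]].
  simpl; rewrite <- E_is_Cmap; apply theta_error_deriv.
Qed.

End ErrorDynamics.

Lemma sumN_le n f g : (forall i, (i < n)%nat -> f i <= g i) -> sumN n f <= sumN n g.
Proof.
  induction n as [|n IH]; simpl; intros H; [lra|].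
  assert (sumN n f <= sumN n g) by (apply IH; intros; apply H; lia).
  pose proof (H n (Nat.lt_succ_diag_r n)); lra.
Qed.

Lemma sumN_plus n f g : sumN n (fun i => f i + g i) = sumN n f + sumN n g.
Proof. induction n as [|n IH]; simpl; [ring|]; rewrite IH; ring. Qed.

Lemma sumN_scal n c f : sumN n (fun i => c * f i) = c * sumN n f.
Proof. induction n as [|n IH]; simpl; [ring|]; rewrite IH; ring. Qed.

Lemma sumN_const n c : sumN n (fun _ => c) = INR n * c.
Proof. induction n as [|n IH]; simpl sumN; [simpl; ring|]; rewrite IH, S_INR; ring. Qed.

Lemma sumN_nonneg n f : (forall i, (i < n)%nat -> 0 <= f i) -> 0 <= sumN n f.
Proof.
  intros H; apply Rle_trans with (sumN n (fun _ => 0)).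
  - rewrite sumN_const; lra.
  - now apply sumN_le.
Qed.

Lemma sumN_term n f i :
  (forall j, (j < n)%nat -> 0 <= f j) -> (i < n)%nat -> f i <= sumN n f.
Proof.
  induction n as [|n IH]; simpl; intros H Hi; [lia|].
  assert (0 <= sumN n f) by (apply sumN_nonneg; intros; apply H; lia).
  pose proof (H n (Nat.lt_succ_diag_r n)).
  destruct (Nat.eq_dec i n) as [->|Hne]; [lra|].
  assert (f i <= sumN n f) by (apply IH; [intros; apply H|]; lia).
  lra.
Qed.

Lemma v2norm_nonneg w : 0 <= v2norm w.
Proof. unfold v2norm; pose proof (Rabs_pos (fst w)); pose proof (Rabs_pos (snd w)); lra. Qed.

Lemma v2norm_triang a b : v2norm (v2add a b) <= v2norm a + v2norm b.
Proof.
  unfold v2norm, v2add; simpl.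
  pose proof (Rabs_triang (fst a) (fst b)); pose proof (Rabs_triang (snd a) (snd b)); lra.
Qed.

Lemma v2norm_sub a b : v2norm (v2sub a b) <= v2norm a + v2norm b.
Proof.
  unfold v2norm, v2sub; simpl.
  pose proof (Rabs_triang (fst a) (- fst b)); pose proof (Rabs_triang (snd a) (- snd b)).
  rewrite !Rabs_Ropp in *; unfold Rminus; lra.
Qed.

Lemma v2norm_scal_e3w c w : v2norm (v2scal c (e3w w)) = Rabs c * v2norm w.
Proof. unfold v2norm, v2scal, e3w; simpl; rewrite !Rabs_mult, Rabs_Ropp; ring. Qed.

Lemma normS_components N s :
  Rabs (s_th s) <= normS N s /\ v2norm (s_x s) <= normS N s /\
  sumN N (fun i => v2norm (s_p s i)) <= normS N s.
Proof.
  unfold normS; pose proof (Rabs_pos (s_th s)); pose proof (v2norm_nonneg (s_x s)).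
  assert (0 <= sumN N (fun i => v2norm (s_p s i)))
    by (apply sumN_nonneg; intros; apply v2norm_nonneg).
  lra.
Qed.

Lemma normS_nonneg N s : 0 <= normS N s.
Proof. destruct (normS_components N s) as (H & _); pose proof (Rabs_pos (s_th s)); lra. Qed.

Lemma coord_le_normE N e i : (i < N)%nat ->
  Rabs (fst (e i)) <= normE N e /\ Rabs (snd (e i)) <= normE N e.
Proof.
  intros Hi.
  assert (H : v2norm (e i) <= normE N e)
    by (apply (sumN_term N (fun j => v2norm (e j))); [intros; apply v2norm_nonneg|exact Hi]).
  unfold v2norm in H; pose proof (Rabs_pos (fst (e i))); pose proof (Rabs_pos (snd (e i))).
  lra.
Qed.

Definition trunc (k : nat) (e : Evec) : Evec :=
  fun i => if Nat.ltb i k then e i else v2zero.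

Lemma Cmap_comb N a b s s' : Cmap N (combS a b s s') = combE a b (Cmap N s) (Cmap N s').
Proof.
  apply functional_extensionality; intro i.
  unfold Cmap, combS, combE, v2add, v2sub, v2scal, v2zero; simpl.
  destruct (Nat.ltb i N); simpl; f_equal; ring.
Qed.

Lemma Cmap_zero N : Cmap N zeroS = zeroE.
Proof.
  apply functional_extensionality; intro i; unfold Cmap, zeroS, zeroE, v2sub, v2zero; simpl.
  destruct (Nat.ltb i N); simpl; f_equal; ring.
Qed.

Lemma trunc_Cmap N s : trunc N (Cmap N s) = Cmap N s.
Proof.
  apply functional_extensionality; intro i; unfold trunc, Cmap.
  destruct (Nat.ltb i N); reflexivity.
Qed.

Lemma normE_Cmap N s : normE N (Cmap N s) <= (INR N + 1) * normS N s.
Proof.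
  unfold normE.
  apply Rle_trans with (sumN N (fun i => v2norm (s_p s i) + v2norm (s_x s))).
  - apply sumN_le; intros i Hi; unfold Cmap.
    destruct (Nat.ltb_spec i N); [apply v2norm_sub | lia].
  - rewrite sumN_plus, sumN_const.
    destruct (normS_components N s) as (_ & Hx & Hp).
    pose proof (pos_INR N); pose proof (v2norm_nonneg (s_x s)).
    assert (INR N * v2norm (s_x s) <= INR N * normS N s) by (apply Rmult_le_compat_l; lra).
    lra.
Qed.

Definition single (k : nat) (w : R2) : Evec := fun i => if Nat.eqb i k then w else v2zero.

Lemma trunc_S k e : trunc (S k) e = combE 1 1 (trunc k e) (single k (e k)).
Proof.
  apply functional_extensionality; intro i; unfold trunc, single, combE, v2add, v2scal, v2zero.
  destruct (Nat.ltb_spec i (S k)), (Nat.ltb_spec i k), (Nat.eqb_spec i k);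
    try lia; subst; try destruct (e i); try destruct (e k); simpl; f_equal; ring.
Qed.

Lemma single_coords k w : single k w = combE (fst w) (snd w) (single k (1, 0)) (single k (0, 1)).
Proof.
  apply functional_extensionality; intro i; unfold single, combE, v2add, v2scal, v2zero.
  destruct (Nat.eqb i k), w; simpl; f_equal; ring.
Qed.

Section LinearBound.

Variables (N : nat) (D : Evec -> State).
Hypothesis Dlin : linear_ES N D.

Let M (k : nat) : R :=
  sumN k (fun i => Rabs (s_th (D (single i (1, 0)))) + Rabs (s_th (D (single i (0, 1))))).

Lemma linear_th_zero : s_th (D zeroE) = 0.
Proof.
  assert (Hz : zeroE = combE 0 0 zeroE zeroE).
  { apply functional_extensionality; intro i; unfold zeroE, combE, v2add, v2scal, v2zero.
    simpl; f_equal; ring. }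
  rewrite Hz; destruct (Dlin 0 0 zeroE zeroE) as [-> _]; ring.
Qed.

Lemma linear_th_trunc_bound e A k :
  (forall i, (i < k)%nat -> Rabs (fst (e i)) <= A /\ Rabs (snd (e i)) <= A) ->
  Rabs (s_th (D (trunc k e))) <= M k * A.
Proof.
  unfold M; induction k as [|k IH]; intros H.
  - replace (trunc 0 e) with zeroE by reflexivity.
    rewrite linear_th_zero, Rabs_R0; simpl; lra.
  - rewrite trunc_S; simpl sumN.
    destruct (Dlin 1 1 (trunc k e) (single k (e k))) as [-> _].
    rewrite single_coords; destruct (Dlin (fst (e k)) (snd (e k)) (single k (1, 0))
      (single k (0, 1))) as [-> _].
    assert (IHk := IH (fun i Hi => H i (Nat.lt_lt_succ_r _ _ Hi))).
    destruct (H k (Nat.lt_succ_diag_r k)) as [Ha Hb].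
    set (X := s_th (D (trunc k e))) in *.
    set (Y := s_th (D (single k (1, 0)))); set (Z := s_th (D (single k (0, 1)))).
    pose proof (Rabs_triang (1 * X) (1 * (fst (e k) * Y + snd (e k) * Z))).
    pose proof (Rabs_triang (fst (e k) * Y) (snd (e k) * Z)).
    rewrite !Rabs_mult, Rabs_R1 in *.
    assert (Rabs (fst (e k)) * Rabs Y <= A * Rabs Y) by (apply Rmult_le_compat_r; [apply Rabs_pos | assumption]).
    assert (Rabs (snd (e k)) * Rabs Z <= A * Rabs Z) by (apply Rmult_le_compat_r; [apply Rabs_pos | assumption]).
    lra.
Qed.

Lemma linear_th_bound : exists K, 0 <= K /\
  forall e, trunc N e = e -> Rabs (s_th (D e)) <= K * normE N e.
Proof.
  exists (M N); split.
  - apply sumN_nonneg; intros i _.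
    pose proof (Rabs_pos (s_th (D (single i (1, 0)))));
    pose proof (Rabs_pos (s_th (D (single i (0, 1))))); lra.
  - intros e He; rewrite <- He at 1.
    apply linear_th_trunc_bound; intros i Hi; exact (coord_le_normE N e i Hi).
Qed.

End LinearBound.

Lemma differential_th_bound N f D :
  differential0_ES N f D -> s_th (f zeroE) = 0 ->
  exists B delta, 0 < B /\ 0 < delta /\ forall e, trunc N e = e ->
    normE N e < delta -> Rabs (s_th (f e)) <= B * normE N e.
Proof.
  intros [Dlin Dapprox] Hf0.
  destruct (linear_th_bound N D Dlin) as (K & HK & HDe).
  destruct (Dapprox 1 Rlt_0_1) as (delta & Hdelta & Happrox).
  exists (K + 1), delta; repeat split; [lra | exact Hdelta |].
  intros e He Hsmall.
  specialize (Happrox e Hsmall); specialize (HDe e He).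
  destruct (normS_components N (subS (subS (f e) (f zeroE)) (D e))) as (Hth & _); simpl in Hth.
  rewrite Hf0 in Hth.
  replace (s_th (f e)) with ((s_th (f e) - 0 - s_th (D e)) + s_th (D e)) by ring.
  pose proof (Rabs_triang (s_th (f e) - 0 - s_th (D e)) (s_th (D e))).
  lra.
Qed.

Lemma rotation_term_bound c c0 w a a0 d :
  v2norm (v2sub (v2sub (v2add (v2scal c (e3w w)) a) (v2add (v2scal c0 (e3w v2zero)) a0)) d)
  <= v2norm (v2sub (v2sub a a0) d) + Rabs c * v2norm w.
Proof.
  replace (v2sub (v2sub (v2add (v2scal c (e3w w)) a) (v2add (v2scal c0 (e3w v2zero)) a0)) d)
    with (v2add (v2sub (v2sub a a0) d) (v2scal c (e3w w))).
  - rewrite <- v2norm_scal_e3w; apply v2norm_triang.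
  - destruct w, a, a0, d; unfold v2add, v2sub, v2scal, e3w, v2zero; simpl; f_equal; ring.
Qed.

Lemma errorDyn_remainder N Lth Lx Lp s d :
  normS N (subS (subS (errorDyn N Lth Lx Lp s) (errorDyn N Lth Lx Lp zeroS)) d)
  <= normS N (subS (subS (Lmap Lth Lx Lp (Cmap N s)) (Lmap Lth Lx Lp zeroE)) d)
     + Rabs (Lth (Cmap N s)) * normS N s.
Proof.
  unfold errorDyn; cbv zeta; rewrite Cmap_zero.
  set (e := Cmap N s).
  unfold normS, subS, Lmap; cbn [s_th s_x s_p zeroS].
  pose proof (rotation_term_bound (Lth e) (Lth zeroE) (s_x s) (Lx e) (Lx zeroE) (s_x d)).
  assert (sumN N (fun i => v2norm (v2sub (v2sub (v2add (v2scal (Lth e) (e3w (s_p s i))) (Lp i e))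
            (v2add (v2scal (Lth zeroE) (e3w v2zero)) (Lp i zeroE))) (s_p d i)))
          <= sumN N (fun i => v2norm (v2sub (v2sub (Lp i e) (Lp i zeroE)) (s_p d i)))
             + Rabs (Lth e) * sumN N (fun i => v2norm (s_p s i))).
  { rewrite <- sumN_scal, <- sumN_plus; apply sumN_le; intros; apply rotation_term_bound. }
  assert (0 <= Rabs (Lth e) * Rabs (s_th s))
    by (apply Rmult_le_pos; apply Rabs_pos).
  lra.
Qed.

Lemma mult_lt_of_lt_div a b d : 0 < b -> a < d / b -> b * a < d.
Proof.
  intros Hb H; apply (Rmult_lt_compat_l b) in H; [|exact Hb].
  replace (b * (d / b)) with d in H by (field; lra); exact H.
Qed.

(** If [DL] is the differential of the gains at [0], then [DL o C] is the
    differential of the error dynamics at [eta = 0]: the remainder splits into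
    the remainder of the gains, which is [o(|C s|) = o(|s|)], and the quadratic
    term [|Lth (C s)| |s| = O(|s|^2)]. *)
Lemma linearization N Lth Lx Lp DL :
  Lth zeroE = 0 ->
  differential0_ES N (Lmap Lth Lx Lp) DL ->
  differential0_SS N (errorDyn N Lth Lx Lp) (fun d => DL (Cmap N d)).
Proof.
  intros HL0 HDL; split.
  { intros a b s s'; rewrite Cmap_comb; apply (proj1 HDL). }
  destruct (differential_th_bound N _ _ HDL HL0) as (B & delta0 & HB & Hdelta0 & Hgrowth).
  set (K := INR N + 1); assert (HK : 0 < K) by (pose proof (pos_INR N); unfold K; lra).
  intros eps Heps.
  destruct (proj2 HDL (eps / (2 * K))) as (delta1 & Hdelta1 & Happrox).
  { apply Rdiv_lt_0_compat; lra. }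
  exists (Rmin (Rmin (delta0 / K) (delta1 / K)) (eps / (2 * K * B))); split.
  { repeat apply Rmin_pos; apply Rdiv_lt_0_compat; try lra.
    apply Rmult_lt_0_compat; lra. }
  intros s Hs.
  pose proof (Rmin_l (Rmin (delta0 / K) (delta1 / K)) (eps / (2 * K * B))).
  pose proof (Rmin_r (Rmin (delta0 / K) (delta1 / K)) (eps / (2 * K * B))).
  pose proof (Rmin_l (delta0 / K) (delta1 / K)); pose proof (Rmin_r (delta0 / K) (delta1 / K)).
  (* [|C s| <= K n], and [K n] is below the thresholds of both estimates. *)
  pose proof (normS_nonneg N s); pose proof (normE_Cmap N s) as HC; fold K in HC.
  set (n := normS N s) in *.
  assert (Hn0 : K * n < delta0) by (apply mult_lt_of_lt_div; lra).
  assert (Hn1 : K * n < delta1) by (apply mult_lt_of_lt_div; lra).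
  assert (Hn2 : 2 * K * B * n < eps) by (apply mult_lt_of_lt_div; [nra | lra]).
  assert (Hlin := Happrox (Cmap N s) ltac:(lra)).
  assert (Hquad := Hgrowth (Cmap N s) (trunc_Cmap N s) ltac:(lra)).
  eapply Rle_trans; [apply errorDyn_remainder|]; fold n.
  assert (eps / (2 * K) * normE N (Cmap N s) <= eps / 2 * n).
  { apply Rle_trans with (eps / (2 * K) * (K * n)).
    - apply Rmult_le_compat_l; [apply Rlt_le, Rdiv_lt_0_compat|]; lra.
    - right; field; lra. }
  assert (Rabs (Lth (Cmap N s)) * n <= eps / 2 * n).
  { apply Rmult_le_compat_r; [lra|].
    assert (B * normE N (Cmap N s) <= B * (K * n)) by (apply Rmult_le_compat_l; lra).
    simpl in Hquad; lra. }
  lra.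
Qed.

Theorem mainTheorem2 (N : nat) (u v : R -> R)
  (x : R -> R2) (th : R -> R) (p : nat -> R2)
  (xh : R -> R2) (thh : R -> R) (ph : nat -> R -> R2)
  (Lth : Evec -> R) (Lx : Evec -> R2) (Lp : nat -> Evec -> R2)
  (HL0th : Lth zeroE = 0) (HL0x : Lx zeroE = v2zero)
  (HL0p : forall i, (i < N)%nat -> Lp i zeroE = v2zero)
  (* system *)
  (Hx : forall t, deriv2 x t (v2scal (u t) (rot (th t) e1)))
  (Hth : forall t, derivable_pt_lim th t (u t * v t))
  (* observer *)
  (Hthh : forall t, derivable_pt_lim thh t
     (u t * v t + Lth (Eerr N (x t) (th t) p (xh t) (thh t) (fun j => ph j t))))
  (Hxh : forall t, deriv2 xh t
     (let E := Eerr N (x t) (th t) p (xh t) (thh t) (fun j => ph j t) in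
      v2add (v2add (v2scal (u t) (rot (thh t) e1)) (v2scal (Lth E) (e3w (xh t)))) (Lx E)))
  (Hph : forall i t, (i < N)%nat -> deriv2 (ph i) t
     (let E := Eerr N (x t) (th t) p (xh t) (thh t) (fun j => ph j t) in
      v2add (v2scal (Lth E) (e3w (ph i t))) (Lp i E))) :
  let etat := fun t => eta (x t) (th t) p (xh t) (thh t) (fun j => ph j t) in
  (* E_i = p~_i - x~ *)
  (forall t i, (i < N)%nat ->
     Eerr N (x t) (th t) p (xh t) (thh t) (fun j => ph j t) i
     = v2sub (s_p (etat t) i) (s_x (etat t))) /\
  (* autonomous error dynamics  d/dt eta = errorDyn eta *)
  (forall t,
     derivable_pt_lim (fun s => s_th (etat s)) t (s_th (errorDyn N Lth Lx Lp (etat t))) /\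
     deriv2 (fun s => s_x (etat s)) t (s_x (errorDyn N Lth Lx Lp (etat t))) /\
     (forall i, (i < N)%nat ->
        deriv2 (fun s => s_p (etat s) i) t (s_p (errorDyn N Lth Lx Lp (etat t)) i))) /\
  (* linearization at eta = 0 is  d/dt delta_eta = L C delta_eta *)
  (forall DL : Evec -> State,
     differential0_ES N (Lmap Lth Lx Lp) DL ->
     differential0_SS N (errorDyn N Lth Lx Lp) (fun d => DL (Cmap N d))).
Proof.
  intros etat; split; [|split].
  - intros t i Hi; rewrite Eerr_Cmap; unfold Cmap.
    destruct (Nat.ltb_spec i N); [reflexivity | lia].
  - exact (error_dynamics N u v x th p xh thh ph Lth Lx Lp Hx Hth Hthh Hxh Hph).
  - intros DL; exact (linearization N Lth Lx Lp DL HL0th).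
Qed.
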